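(* If a graph $G$ of order $n(G)$ contains a universal vertex, then $\mathrm{sg_e}(G) \ge n(G)-1$. Moreover, if $G$ has exactly one universal vertex, then $\mathrm{sg_e}(G) = n(G)-1$.
   Context: All graphs are finite, simple and connected. A vertex $u$ is universal if $\deg_G(u) = n(G)-1$. A set $S \subseteq V(G)$ is a strong edge geodetic set of $G$ if one can assign to every unordered pair $\{u,v\}$ of distinct vertices of $S$ either one shortest $u,v$-path $P_{uv}$ in $G$ or no path, in such a way that every edge of $G$ lies on at least one of the assigned paths. The strong edge geodetic number $\mathrm{sg_e}(G)$ is the minimum cardinality of a strong edge geodetic set of $G$. *)

From mathcomp Require Import all_boot.
From mathcomp Require Import boolp.

Set Implicit Arguments.
Unset Strict Implicit.
Unset Printing Implicit Defensive.

Section StrongEdgeGeodetic.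
Variables (T : finType) (e : rel T).

Definition simple_connected_graph : Prop :=
  [/\ symmetric e, irreflexive e & forall x y : T, connect e x y].

Definition graph_order : nat := #|T|.

Definition deg (u : T) : nat := #|[set v | e u v]|.
Definition universal (u : T) : bool := deg u == #|T| - 1.

Definition is_walk (u v : T) (p : seq T) : bool := path e u p && (last u p == v).

(* a shortest u,v-path: a u,v-walk of minimum length (such walks are paths) *)
Definition shortest_path (u v : T) (p : seq T) : Prop :=
  is_walk u v p /\ forall q : seq T, is_walk u v q -> size p <= size q.

Definition edge_on (x y u : T) (p : seq T) : bool :=
  ((x, y) \in zip (u :: p) p) || ((y, x) \in zip (u :: p) p).

(* Unordered pairs {u,v} of distinct vertices are represented by the ordered
   pair with enum_rank u < enum_rank v.  An assignment P gives for such a pair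
   either one shortest u,v-path (Some p, the path being u :: p) or no path. *)
Definition strong_edge_geodetic (S : {set T}) : Prop :=
  exists P : T -> T -> option (seq T),
    (forall u v p, u \in S -> v \in S -> enum_rank u < enum_rank v ->
       P u v = Some p -> shortest_path u v p) /\
    (forall x y, e x y -> exists u v p,
       [/\ u \in S, v \in S, enum_rank u < enum_rank v,
           P u v = Some p & edge_on x y u p]).

(* strong edge geodetic number: minimum cardinality of a strong edge geodetic
   set (V(G) itself is one, so #|T| is a harmless default for the min) *)
Definition sge : nat :=
  \big[minn/#|T|]_(S : {set T} | `[< strong_edge_geodetic S >]) #|S|.

End StrongEdgeGeodetic.

(* If w is universal, every pair of vertices is at distance at most 2, and a
   shortest path through w has w as its middle vertex.  Hence an edge xw can
   lie on a shortest u,v-path only if x is an end vertex u or v: every vertex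
   other than w belongs to a strong edge geodetic set.  Conversely, if w is the
   only universal vertex, each x <> w has a non-neighbour t <> w, and the
   geodesic x w t covers the edge xw, so V(G) minus w is strong edge geodetic. *)
From mathcomp Require Import all_boot all_order.
From mathcomp Require Import boolp.

Set Implicit Arguments.
Unset Strict Implicit.
Unset Printing Implicit Defensive.

Import Order.TTheory.

Section StrongEdgeGeodeticUniversal.
Variables (T : finType) (e : rel T).

Lemma sge_le_card (S : {set T}) : strong_edge_geodetic e S -> sge e <= #|S|.
Proof.
move=> geoS; rewrite /sge -minEnat.
by apply: (@bigmin_le_cond _ nat); apply/asboolP.
Qed.

Lemma leq_sge n : n <= #|T| ->
  (forall S, strong_edge_geodetic e S -> n <= #|S|) -> n <= sge e.
Proof.
move=> n_le_T n_le_geo; rewrite /sge -minEnat.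
by apply: (@le_bigmin _ nat) => // S /asboolP; apply: n_le_geo.
Qed.

Lemma edge_onC (x y u : T) (p : seq T) : edge_on x y u p = edge_on y x u p.
Proof. by rewrite /edge_on orbC. Qed.

(* When [f v u] covers the same edges as [f u v], the orientation of unordered
   pairs by [enum_rank] in [strong_edge_geodetic] does not matter. *)
Lemma strong_edge_geodetic_sym (S : {set T}) (f : T -> T -> seq T) :
  (forall u v, u \in S -> v \in S -> u != v -> shortest_path e u v (f u v)) ->
  (forall x y u v, edge_on x y u (f u v) = edge_on x y v (f v u)) ->
  (forall x y, e x y ->
     exists u v, [/\ u \in S, v \in S, u != v & edge_on x y u (f u v)]) ->
  strong_edge_geodetic e S.
Proof.
move=> f_short f_sym f_cover; exists (fun u v => Some (f u v)); split.
  move=> u v p uS vS ruv [<-]; apply: f_short => //.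
  by apply: contraTneq ruv => ->; rewrite ltnn.
move=> x y /f_cover [u [v [uS vS uv xy_on]]].
have : enum_rank u != enum_rank v by rewrite (inj_eq enum_rank_inj).
rewrite neq_ltn => /orP [ruv | rvu].
- by exists u, v, (f u v).
- by exists v, u, (f v u); rewrite -f_sym.
Qed.

Hypotheses (e_sym : symmetric e) (e_irr : irreflexive e).

Lemma universalP w : reflect (forall v, v != w -> e w v) (universal e w).
Proof.
have sub : [set v | e w v] \subset [set~ w].
  by apply/subsetP => v; rewrite !inE; apply: contraTneq => ->; rewrite e_irr.
rewrite /universal /deg subn1 -(cardsC1 w).
apply: (iffP eqP) => [card_w v vw | adj_w].
  have /eqP nbhd_w : [set v | e w v] == [set~ w] by rewrite eqEcard sub card_w /=.
  by move: vw; rewrite -in_setC1 -nbhd_w inE.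
apply: eq_card => v; rewrite !inE.
by case: (eqVneq v w) => [->|/adj_w ->]; rewrite ?e_irr.
Qed.

Lemma not_universalP w : ~~ universal e w -> exists2 t, t != w & ~~ e w t.
Proof.
move=> not_univ_w.
case: (pickP [pred t | (t != w) && ~~ e w t]) => [t /andP [] | none].
  by exists t.
case/negP: not_univ_w; apply/universalP => v vw.
by move: (none v) => /=; rewrite vw => /negbFE.
Qed.

Lemma shortest_path_adj u v : e u v -> shortest_path e u v [:: v].
Proof.
move=> euv; split=> [|[|a q] //]; first by rewrite /is_walk /= euv eqxx.
by rewrite /is_walk /= => /eqP uv; rewrite uv e_irr in euv.
Qed.

Lemma shortest_path_common_neighbor u a v :
  u != v -> ~~ e u v -> e u a -> e a v -> shortest_path e u v [:: a; v].
Proof.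
move=> uv nuv eua eav; split=> [|[|b [|c q]] //]; rewrite /is_walk /=.
- by rewrite eua eav eqxx.
- by move=> /eqP uv'; rewrite uv' eqxx in uv.
- by move=> /andP [/andP [eub _] /eqP bv]; rewrite -bv eub in nuv.
Qed.

Variable w : T.
Hypothesis univ_w : universal e w.

Lemma shortest_path_size_le2 u v p :
  u != v -> shortest_path e u v p -> size p <= 2.
Proof.
have adj_w := universalP w univ_w.
move=> uv [_ short]; case: (boolP (e u v)) => [euv | nuv].
  by rewrite (leq_trans (short [:: v] _)) // /is_walk /= euv eqxx.
have uw : u != w by apply: contraNneq nuv => uw; rewrite uw adj_w // -uw eq_sym.
have vw : v != w by apply: contraNneq nuv => vw; rewrite vw e_sym adj_w // -vw.
by apply: (short [:: w; v]); rewrite /is_walk /= e_sym !adj_w // eqxx.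
Qed.

Lemma edge_on_universal x u v p :
  u != v -> shortest_path e u v p -> edge_on x w u p -> (x == u) || (x == v).
Proof.
have adj_w := universalP w univ_w.
move=> uv sp; have := shortest_path_size_le2 uv sp.
case: sp => /andP [walk_p /eqP last_p] short.
rewrite /edge_on; case: p walk_p last_p short => [|a [|b [|c q]]] //= walk_p.
  move=> av _ _; rewrite !inE !xpair_eqE -av.
  by case/orP => [/andP [/eqP -> _] | /andP [_ /eqP ->]]; rewrite eqxx ?orbT.
move=> bv short _; rewrite -bv in uv short *.
have nub : ~~ e u b.
  apply/negP => eub; have := short [:: b].
  by rewrite /is_walk /= eub eqxx => /(_ isT).
rewrite !inE !xpair_eqE -!orbA; case/or4P => /andP [/eqP l /eqP r].
- by rewrite l eqxx.
- by rewrite -r in uv nub; rewrite e_sym adj_w // in nub.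
- by rewrite -l in uv nub; rewrite adj_w // eq_sym in nub.
- by rewrite r eqxx orbT.
Qed.

Lemma strong_edge_geodetic_universal (S : {set T}) :
  strong_edge_geodetic e S -> [set~ w] \subset S.
Proof.
move=> [P [P_short P_cover]]; apply/subsetP => x; rewrite !inE => xw.
have exw : e x w by rewrite e_sym; apply: (universalP w univ_w).
have [u [v [p [uS vS ruv Puv xw_on]]]] := P_cover x w exw.
have uv : u != v by apply: contraTneq ruv => ->; rewrite ltnn.
have sp := P_short u v p uS vS ruv Puv.
by case/orP: (edge_on_universal uv sp xw_on) => /eqP ->.
Qed.

Lemma card_strong_edge_geodetic_universal (S : {set T}) :
  strong_edge_geodetic e S -> #|T| - 1 <= #|S|.
Proof.
by move=> /strong_edge_geodetic_universal /subset_leq_card; rewrite cardsC1 subn1.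
Qed.

Definition geodesic_via (u v : T) : seq T := if e u v then [:: v] else [:: w; v].

Lemma edge_on_geodesic_viaC x y u v :
  edge_on x y u (geodesic_via u v) = edge_on x y v (geodesic_via v u).
Proof.
rewrite /geodesic_via e_sym /edge_on.
by case: (e v u); rewrite /= !inE !xpair_eqE; do ![case: (_ == _)].
Qed.

Hypothesis univ_uniq : forall x, universal e x -> x = w.

Lemma strong_edge_geodetic_setC1 : strong_edge_geodetic e [set~ w].
Proof.
have adj_w := universalP w univ_w.
apply: (@strong_edge_geodetic_sym _ geodesic_via).
- move=> u v; rewrite !inE => uw vw uv; rewrite /geodesic_via.
  case: ifPn => [euv | nuv]; first exact: shortest_path_adj.
  by apply: shortest_path_common_neighbor => //; [rewrite e_sym |]; apply: adj_w.
- exact: edge_on_geodesic_viaC.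
- have spoke_on z : z != w -> exists u v, [/\ u \in [set~ w], v \in [set~ w],
      u != v & edge_on z w u (geodesic_via u v)].
    move=> zw; have : ~~ universal e z by apply: contraNN zw => /univ_uniq ->.
    case/not_universalP => t tz nzt.
    have tw : t != w by apply: contraNneq nzt => ->; rewrite e_sym adj_w.
    exists z, t; rewrite !inE zw tw eq_sym tz /geodesic_via (negPf nzt).
    by rewrite /edge_on /= !inE eqxx.
  move=> x y exy; case: (eqVneq x w) => [xw | xw].
    have yw : y != w by apply: contraTneq exy => ->; rewrite xw e_irr.
    have [u [v [? ? ? yw_on]]] := spoke_on y yw.
    by exists u, v; rewrite xw edge_onC.
  case: (eqVneq y w) => [-> | yw]; first exact: spoke_on.
  exists x, y; rewrite !inE xw yw /geodesic_via exy; split=> //.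
  - by apply: contraTneq exy => ->; rewrite e_irr.
  - by rewrite /edge_on /= !inE eqxx.
Qed.

End StrongEdgeGeodeticUniversal.

Theorem mainTheorem11 (T : finType) (e : rel T) :
  simple_connected_graph e ->
  (exists u : T, universal e u) ->
  graph_order T - 1 <= sge e /\
  (#|[set u : T | universal e u]| = 1 -> sge e = graph_order T - 1).
Proof.
case=> e_sym e_irr _ [w univ_w].
have lower : #|T| - 1 <= sge e.
  apply: leq_sge => [|S]; first exact: leq_subr.
  exact: (card_strong_edge_geodetic_universal e_sym e_irr univ_w).
split=> // /eqP /cards1P [z univ_set].
have univ_z y : universal e y -> y = z.
  by move=> univ_y; apply/set1P; rewrite -univ_set inE.
have univ_uniq x : universal e x -> x = w.
  by move=> /univ_z ->; rewrite (univ_z w univ_w).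
apply/eqP; rewrite /graph_order eqn_leq lower andbT subn1 -(cardsC1 w).
exact/sge_le_card/(strong_edge_geodetic_setC1 e_sym e_irr univ_w univ_uniq).
Qed.
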